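(* A linear functional $H:\underline{\mathcal Z}\to\mathcal Y$ has a formal convolution representation if and only if it has the minimal FMP and is minimally continuous.
   Context: Let $(\mathcal Z,\|\cdot\|)$ and $(\mathcal Y,\|\cdot\|_{\mathcal Y})$ be normed vector spaces over $\mathbb R$ and $\mathcal B=\{z\in\mathcal Z:\|z\|\le1\}$. Let $\mathbb Z_-=\{0,-1,-2,\dots\}$; elements of $\mathcal Z^{\mathbb Z_-}$ are sequences $\underline z=(z_t)_{t\le0}$. For $t\in\mathbb Z_-$, $\delta^t:\mathcal Z\to\mathcal Z^{\mathbb Z_-}$ maps $z$ to the sequence whose entry at time $t$ is $z$ and all other entries are $0$. Standing assumption: $\underline{\mathcal Z}\subseteq\mathcal Z^{\mathbb Z_-}$ is a set such that (a) $\underline{\mathcal Z}$ is convex and $\underline{\mathcal Z}=\{-\underline z:\underline z\in\underline{\mathcal Z}\}$; (b) $\delta^t(\mathcal B)\subseteq\underline{\mathcal Z}$ for all $t\in\mathbb Z_-$; (c) for every $\underline z\in\underline{\mathcal Z}$ and every $J\subseteq\mathbb Z_-$, the sequence $\sum_{t\in J}\delta^t(z_t)$ (equal to $z_t$ at times $t\in J$ and $0$ elsewhere) belongs to $\underline{\mathcal Z}$. A functional $H:\underline{\mathcal Z}\to\mathcal Y$ is linear if it is the restriction of a linear map defined on the linear span of $\underline{\mathcal Z}$. $L(\mathcal Z,\mathcal Y)$ is the space of continuous linear maps $\mathcal Z\to\mathcal Y$. $H$ has a formal convolution representation if there is $\underline\kappa\in L(\mathcal Z,\mathcal Y)^{\mathbb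 Z_-}$ with $H(\underline z)=\lim_{T\to-\infty}\sum_{t=T}^0\kappa_t(z_t)$ for all $\underline z\in\underline{\mathcal Z}$. $H$ is minimally continuous if $H\circ\delta^t:\mathcal B\to\mathcal Y$ is continuous for every $t\in\mathbb Z_-$. $H$ has the minimal fading memory property (minimal FMP) if $H(\sum_{t=T}^0\delta^t(z_t))\to H(\underline z)$ as $T\to-\infty$ for every $\underline z\in\underline{\mathcal Z}$. *)

(* Time index t in Z_- = {0,-1,-2,...} is encoded
   by n : nat with t = -n; so a sequence (z_t)_{t<=0} is a function nat -> Z. *)
From HB Require Import structures.
From mathcomp Require Import all_boot all_order all_algebra.
From mathcomp Require Import all_classical all_reals all_analysis.
Set Implicit Arguments. Unset Strict Implicit. Unset Printing Implicit Defensive.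
Import Order.TTheory GRing.Theory Num.Theory.
Local Open Scope classical_set_scope.
Local Open Scope ring_scope.

Section Defs.
Context {R : realType} {Z Y : normedModType R}.

Definition unit_ballZ : set Z := [set z | `|z| <= 1].

Definition delta (t : nat) (z : Z) : nat -> Z :=
  fun n => if n == t then z else 0.

(* \sum_{t in J} delta^t(z_t) *)
Definition restrict_seq (J : set nat) (z : nat -> Z) : nat -> Z :=
  fun n => if `[< J n >] then z n else 0.

(* \sum_{t = T}^{0} delta^t(z_t), with T = -N *)
Definition trunc_seq (N : nat) (z : nat -> Z) : nat -> Z :=
  fun n => if (n <= N)%N then z n else 0.

Definition standing_assumption (Zs : set (nat -> Z)) : Prop :=
  [/\ (forall x y (l : R), Zs x -> Zs y -> 0 <= l -> l <= 1 ->
         Zs (l *: x + (1 - l) *: y)),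
      (forall x, Zs x -> Zs (- x)),
      (forall t z, unit_ballZ z -> Zs (delta t z)) &
      (forall z (J : set nat), Zs z -> Zs (restrict_seq J z))].

Definition lin_span (Zs : set (nat -> Z)) : set (nat -> Z) :=
  [set v | exists n (a : 'I_n -> R) (w : 'I_n -> nat -> Z),
             (forall i, Zs (w i)) /\ v = \sum_(i < n) a i *: w i].

Definition linear_on (Zs : set (nat -> Z)) (H : (nat -> Z) -> Y) : Prop :=
  exists L : (nat -> Z) -> Y,
    (forall (a : R) x y, lin_span Zs x -> lin_span Zs y ->
        L (a *: x + y) = a *: L x + L y) /\
    (forall z, Zs z -> H z = L z).

Definition formal_conv_rep (Zs : set (nat -> Z)) (H : (nat -> Z) -> Y) : Prop :=
  exists kappa : nat -> Z -> Y,
    (forall t, (forall (a : R) u v, kappa t (a *: u + v) = a *: kappa t u + kappa t v)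
               /\ continuous (kappa t)) /\
    (forall z, Zs z ->
       (fun N : nat => \sum_(t < N.+1) kappa t (z t)) @ \oo --> H z).

Definition minimally_continuous (H : (nat -> Z) -> Y) : Prop :=
  forall t : nat, {within unit_ballZ, continuous (fun z : Z => H (delta t z))}.

Definition minimal_FMP (Zs : set (nat -> Z)) (H : (nat -> Z) -> Y) : Prop :=
  forall z, Zs z -> (fun N : nat => H (trunc_seq N z)) @ \oo --> H z.

End Defs.

(* Testing a formal convolution on delta^t u and on truncations of z shows
   that kappa_t is the impulse response u |-> H (delta^t u) and that
   H (trunc_N z) is the N-th partial convolution sum; this gives minimal
   continuity and the minimal FMP. Conversely, linearity of H on the span
   splits each truncation of z into the impulse responses of its entries, so
   the minimal FMP is exactly convergence of the formal convolution series,
   and minimal continuity makes each (linear) impulse response continuous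
   at 0, hence everywhere. *)
From HB Require Import structures.
From mathcomp Require Import all_boot all_order all_algebra.
From mathcomp Require Import all_classical all_reals all_analysis.
Import Order.TTheory GRing.Theory Num.Theory.
Local Open Scope classical_set_scope.
Local Open Scope ring_scope.

Section LinearMaps.
Context {R : realType} {Z Y : normedModType R}.

Lemma linear_map0 (k : Z -> Y) : linear k -> k 0 = 0.
Proof. by move=> lk; have := lk (-1) 0 0; rewrite scaler0 addr0 scaleN1r addNr. Qed.

Lemma linear_continuous_within_unit_ball (k : Z -> Y) :
  linear k -> {within unit_ballZ, continuous k} -> continuous k.
Proof.
move=> lk /subspace_continuousP kB.
pose kL : {linear Z -> Y} := HB.pack k (GRing.isLinear.Build _ _ _ _ k lk).
apply: (@continuousfor0_continuous _ _ _ kL).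
have ball0 : (@unit_ballZ R Z) 0 by rewrite /unit_ballZ /= normr0.
have ball_nbhs0 : nbhs (0 : Z) unit_ballZ.
  by apply/nbhs_norm0P; exists 1; [exact: ltr01 | move=> y /= /ltW].
by rewrite /prop_for /continuous_at -(within_interior ball_nbhs0); exact: kB ball0.
Qed.

End LinearMaps.

Section Sequences.
Context {R : realType} {Z : normedModType R}.
Implicit Types (z : nat -> Z) (u : Z).

Lemma delta_linear t : linear (@delta R Z t).
Proof.
move=> a u v; apply: funext => n; rewrite /delta !fctE.
by case: (n == t); rewrite ?scaler0 ?addr0.
Qed.

Lemma deltaZ a t u : delta t (a *: u) = a *: @delta R Z t u.
Proof.
by apply: funext => n; rewrite /delta !fctE; case: (n == t); rewrite ?scaler0.
Qed.

Lemma trunc_seq0 z : trunc_seq 0 z = delta 0 (z 0%N).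
Proof. by apply: funext => n; rewrite /trunc_seq /delta leqn0; case: eqP => [->|]. Qed.

Lemma trunc_seqS N z : trunc_seq N.+1 z = trunc_seq N z + delta N.+1 (z N.+1).
Proof.
apply: funext => n; rewrite /trunc_seq /delta !fctE leq_eqVlt ltnS.
by case: eqP => [->|_] /=; rewrite ?ltnn ?add0r ?addr0.
Qed.

Lemma restrict_closed_trunc (Zs : set (nat -> Z)) :
  (forall z J, Zs z -> Zs (restrict_seq J z)) ->
  forall N z, Zs z -> Zs (trunc_seq N z).
Proof.
move=> Zs_restrict N z /(Zs_restrict _ [set n | (n <= N)%N]).
congr Zs; apply: funext => n.
by rewrite /trunc_seq /restrict_seq /= asboolb.
Qed.

End Sequences.

Section ConvolutionSums.
Context {R : realType} {Z Y : normedModType R}.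
Variable kappa : nat -> Z -> Y.
Hypothesis kappa0 : forall t, kappa t 0 = 0.

Definition conv_partial_sum (z : nat -> Z) (N : nat) : Y :=
  \sum_(t < N.+1) kappa t (z t).

Lemma conv_partial_sum_trunc N M z : (N <= M)%N ->
  conv_partial_sum (trunc_seq N z) M = conv_partial_sum z N.
Proof.
move=> NM; rewrite /conv_partial_sum.
rewrite -(big_mkord xpredT (fun t => kappa t (trunc_seq N z t))).
rewrite -(big_mkord xpredT (fun t => kappa t (z t))) (@big_cat_nat _ _ _ N.+1) //=.
rewrite [X in _ + X]big1_seq ?addr0; last first.
  move=> t /andP[_]; rewrite mem_index_iota => /andP[Nt _].
  by rewrite /trunc_seq leqNgt Nt kappa0.
by apply: eq_big_nat => t /andP[_ tN]; rewrite /trunc_seq -ltnS tN.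
Qed.

Lemma conv_partial_sum_delta t M u : (t <= M)%N ->
  conv_partial_sum (delta t u) M = kappa t u.
Proof.
move=> tM; rewrite /conv_partial_sum (bigD1 (Ordinal (tM : (t < M.+1)%N))) //=.
rewrite /delta eqxx big1 ?addr0 // => s /negbTE st.
by rewrite ifF ?kappa0 //; apply: contraFF st => /eqP st; apply/eqP/val_inj.
Qed.

End ConvolutionSums.

Lemma cvg_eventually_cst_eq {R : realType} {Y : normedModType R}
    (v : nat -> Y) (N : nat) (c l : Y) :
  (forall M, (N <= M)%N -> v M = c) -> v @ \oo --> l -> l = c.
Proof.
move=> vc /(cvg_lim (@norm_hausdorff _ _)) <-.
by apply: (cvg_lim (@norm_hausdorff _ _)); apply: cvg_near_cst; exists N.
Qed.

Definition impulse_response {R : realType} {Z Y : normedModType R}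
  (L : (nat -> Z) -> Y) (t : nat) (u : Z) : Y := L (delta t u).

Section ConvolutionRepresentation.
Context {R : realType} {Z Y : normedModType R}.
Context {Zs : set (nat -> Z)} {H : (nat -> Z) -> Y}.
Hypothesis Zs_delta : forall t z, unit_ballZ z -> Zs (delta t z).
Hypothesis Zs_restrict : forall z J, Zs z -> Zs (restrict_seq J z).

Let Zs_trunc N z : Zs z -> Zs (trunc_seq N z).
Proof. exact: restrict_closed_trunc. Qed.

Section Necessity.
Variable kappa : nat -> Z -> Y.
Hypothesis kappa_linear : forall t, linear (kappa t).
Hypothesis H_conv : forall z, Zs z -> conv_partial_sum kappa z @ \oo --> H z.

Let kappa0 t : kappa t 0 = 0. Proof. exact: linear_map0. Qed.

Lemma conv_rep_trunc N z : Zs z -> H (trunc_seq N z) = conv_partial_sum kappa z N.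
Proof.
move=> Zz; apply: (cvg_eventually_cst_eq _ N).
  by move=> M; exact: conv_partial_sum_trunc.
exact/H_conv/Zs_trunc.
Qed.

Lemma conv_rep_delta t u : unit_ballZ u -> H (delta t u) = kappa t u.
Proof.
move=> Bu; apply: (cvg_eventually_cst_eq _ t).
  by move=> M; exact: conv_partial_sum_delta.
exact/H_conv/Zs_delta.
Qed.

End Necessity.

Lemma formal_conv_rep_minimal_FMP : formal_conv_rep Zs H -> minimal_FMP Zs H.
Proof.
move=> [kappa [kappa_lc H_conv]] z Zz.
have -> : (fun N => H (trunc_seq N z)) = conv_partial_sum kappa z.
  by apply: funext => N; apply: conv_rep_trunc => // t; exact: (kappa_lc t).1.
exact: H_conv.
Qed.

Lemma formal_conv_rep_minimally_continuous :
  formal_conv_rep Zs H -> minimally_continuous H.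
Proof.
move=> [kappa [kappa_lc H_conv]] t.
apply: (@subspace_eq_continuous _ _ _ (kappa t)).
  move=> u /[!in_setE] Bu; apply/esym/conv_rep_delta => // s.
  exact: (kappa_lc s).1.
exact/continuous_subspaceT/(kappa_lc t).2.
Qed.

Section Sufficiency.
Context {L : (nat -> Z) -> Y}.
Hypothesis L_linear : forall (a : R) x y, lin_span Zs x -> lin_span Zs y ->
  L (a *: x + y) = a *: L x + L y.
Hypothesis H_L : forall z, Zs z -> H z = L z.

Lemma lin_span_subset : Zs `<=` lin_span Zs.
Proof. by move=> x Zx; exists 1%N, (fun=> 1), (fun=> x); rewrite big_ord1 scale1r. Qed.

Lemma lin_span_delta t u : lin_span Zs (delta t u).
Proof.
pose c := `|u| + 1; have c_gt0 : 0 < c by rewrite ltr_pwDr ?normr_ge0.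
exists 1%N, (fun=> c), (fun=> delta t (c^-1 *: u)); split.
  move=> _; apply: Zs_delta; rewrite /unit_ballZ /= normrZ normfV gtr0_norm //.
  by rewrite ler_pdivrMl // mulr1 lerDl.
by rewrite big_ord1 -deltaZ scalerA mulfV ?scale1r // gt_eqF.
Qed.

Lemma impulse_response_linear t : linear (impulse_response L t).
Proof.
move=> a u v; rewrite /impulse_response delta_linear L_linear //.
all: exact: lin_span_delta.
Qed.

Lemma L_trunc_seq N z : Zs z ->
  L (trunc_seq N z) = conv_partial_sum (impulse_response L) z N.
Proof.
move=> Zz; elim: N => [|N IH]; first by rewrite trunc_seq0 /conv_partial_sum big_ord1.
rewrite /conv_partial_sum big_ord_recr /= -/(conv_partial_sum _ _ _) -IH.
rewrite trunc_seqS -[trunc_seq N z]scale1r L_linear ?scale1r //.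
  exact/lin_span_subset/Zs_trunc.
exact: lin_span_delta.
Qed.

Lemma impulse_response_continuous t :
  minimally_continuous H -> continuous (impulse_response L t).
Proof.
move=> H_mc; apply: linear_continuous_within_unit_ball.
  exact: impulse_response_linear.
apply: subspace_eq_continuous (H_mc t) => u /[!in_setE] Bu.
exact/H_L/Zs_delta.
Qed.

Lemma minimal_FMP_formal_conv_rep :
  minimal_FMP Zs H -> minimally_continuous H -> formal_conv_rep Zs H.
Proof.
move=> H_fmp H_mc; exists (impulse_response L); split.
  move=> t; split; first exact: impulse_response_linear.
  exact: impulse_response_continuous.
move=> z Zz; change (conv_partial_sum (impulse_response L) z @ \oo --> H z).
have -> : conv_partial_sum (impulse_response L) z = fun N => H (trunc_seq N z).
  by apply: funext => N; rewrite H_L ?L_trunc_seq //; apply: Zs_trunc.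
exact: H_fmp.
Qed.

End Sufficiency.
End ConvolutionRepresentation.

Theorem lemma3p3 (R : realType) (Z Y : normedModType R)
  (Zs : set (nat -> Z)) (H : (nat -> Z) -> Y) :
  standing_assumption Zs -> linear_on Zs H ->
  (formal_conv_rep Zs H <-> minimal_FMP Zs H /\ minimally_continuous H).
Proof.
move=> [_ _ Zs_delta Zs_restrict] [L [L_linear H_L]]; split.
  move=> H_rep; split.
    exact: formal_conv_rep_minimal_FMP Zs_restrict H_rep.
  exact: formal_conv_rep_minimally_continuous Zs_delta H_rep.
by case; apply: (minimal_FMP_formal_conv_rep Zs_delta Zs_restrict L_linear H_L).
Qed.
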